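(* Let $p$ and $v$ be two distinct points in the plane and let $R$ be a ray emanating from $v$ that does not pass through $p$. Let $c_1,c_2$ be constants with $c_2>c_1>0$. Then the largest value of $|pq|/\max\{|vq|,c_2\}$ over all points $q$ on $R$ with $|pq|>|vq|\geqslant c_1$ is achieved when $|vq|=c_1$ or $|vq|=c_2$.
   Context: $|xy|$ denotes the Euclidean distance between points $x$ and $y$. *)

From Stdlib Require Import Reals.
Open Scope R_scope.

Definition point : Type := (R * R)%type.

Definition edist (x y : point) : R :=
  sqrt ((fst x - fst y) ^ 2 + (snd x - snd y) ^ 2).

Definition on_ray (v w q : point) : Prop :=
  exists t : R, 0 <= t /\
    q = (fst v + t * (fst w - fst v), snd v + t * (snd w - snd v)).

Definition ratio (p v : point) (c2 : R) (q : point) : R :=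
  edist p q / Rmax (edist v q) c2.

(* Measure |vq| = s along the ray.  By the law of cosines |pq|^2 = g(s) with
   g(s) = s^2 - 2 a s + |pv|^2 a monic quadratic, a being the signed length of
   the projection of vp onto the ray.  On [c1, c2] the ratio is sqrt(g s) / c2
   and the convex g is maximal at an endpoint.  For s > c2 the ratio is
   sqrt(g(s)/s^2) = sqrt(1 - 2a/s + |pv|^2/s^2); the constraint g(s) > s^2 says
   this quadratic in 1/s exceeds its value 1 at 0, so by convexity it only grows
   as 1/s increases to 1/c2. *)

From Stdlib Require Import Reals Lra Psatz.
Open Scope R_scope.

Lemma div_le_div_of_sqr (x y M N : R) : 0 <= x -> 0 <= y -> 0 < M -> 0 < N ->
  x ^ 2 * N ^ 2 <= y ^ 2 * M ^ 2 -> x / M <= y / N.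
Proof.
  intros hx hy hM hN h.
  assert (hxy : x * N <= y * M).
  { apply Rsqr_incr_0_var; [unfold Rsqr; nra | nra]. }
  apply (Rmult_le_reg_r (M * N)); [nra|].
  replace (x / M * (M * N)) with (x * N) by (field; lra).
  replace (y / N * (M * N)) with (y * M) by (field; lra).
  exact hxy.
Qed.

Section MonicQuadratic.

Variables a D : R.

Let g (x : R) : R := x ^ 2 - 2 * a * x + D.

Lemma monic_quadratic_le_max_endpoints (c1 c2 s : R) : c1 <= s <= c2 ->
  g s <= Rmax (g c1) (g c2).
Proof.
  intros hs.
  assert (hconv : g s * (c2 - c1) =
    g c1 * (c2 - s) + g c2 * (s - c1) + (s - c1) * (s - c2) * (c2 - c1))
    by (unfold g; ring).
  destruct (Rle_lt_dec c2 c1); [replace s with c1 by lra; apply Rmax_l|].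
  assert ((s - c1) * (s - c2) <= 0) by nra.
  assert ((s - c1) * (s - c2) * (c2 - c1) <= 0) by nra.
  apply (Rmult_le_reg_r (c2 - c1)); [lra|].
  unfold Rmax; destruct (Rle_dec (g c1) (g c2)); nra.
Qed.

Lemma monic_quadratic_scaled_le (c s : R) : 0 <= D -> 0 < c < s -> s ^ 2 < g s ->
  g s * c ^ 2 <= g c * s ^ 2.
Proof.
  intros hD hcs hgt.
  assert (hfar : 2 * a * s < D) by (unfold g in hgt; lra).
  assert (hdiff : g s * c ^ 2 - g c * s ^ 2 = (s - c) * (2 * a * c * s - D * (s + c)))
    by (unfold g; ring).
  assert (2 * a * c * s <= D * (s + c)) by nra.
  nra.
Qed.

Lemma monic_quadratic_ratio_max_at_endpoints (c1 c2 s : R) :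
  0 <= D -> 0 < c1 < c2 -> c1 <= s -> s ^ 2 < g s ->
  exists c, (c = c1 \/ c = c2) /\ g s * c2 ^ 2 <= g c * Rmax s c2 ^ 2.
Proof.
  intros hD hc hs hgt.
  destruct (Rle_lt_dec s c2) as [hsc2 | hsc2].
  - rewrite Rmax_right by exact hsc2.
    assert (hmax := monic_quadratic_le_max_endpoints c1 c2 s (conj hs hsc2)).
    unfold Rmax in hmax; destruct (Rle_dec (g c1) (g c2)).
    + exists c2; split; [right; reflexivity | nra].
    + exists c1; split; [left; reflexivity | nra].
  - rewrite Rmax_left by lra.
    exists c2; split; [right; reflexivity|].
    apply monic_quadratic_scaled_le; lra.
Qed.

End MonicQuadratic.

Lemma edist_sqr (x y : point) :
  edist x y ^ 2 = (fst x - fst y) ^ 2 + (snd x - snd y) ^ 2.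
Proof. apply pow2_sqrt, Rplus_le_le_0_compat; apply pow2_ge_0. Qed.

Lemma edist_pos (x y : point) : x <> y -> 0 < edist x y.
Proof.
  destruct x as [x1 x2], y as [y1 y2]; intros hxy; apply sqrt_lt_R0; cbn [fst snd].
  assert (h1 := pow2_ge_0 (x1 - y1)); assert (h2 := pow2_ge_0 (x2 - y2)).
  apply Rnot_le_lt; intros h0; apply hxy.
  f_equal; apply Rminus_diag_uniq, Rsqr_0_uniq, Rle_antisym;
    solve [rewrite Rsqr_pow2; lra | apply Rle_0_sqr].
Qed.

Lemma edist_ray (v w : point) (t : R) : 0 <= t ->
  edist v (fst v + t * (fst w - fst v), snd v + t * (snd w - snd v)) = t * edist v w.
Proof.
  intros ht; unfold edist; cbn [fst snd].
  replace ((fst v - (fst v + t * (fst w - fst v))) ^ 2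
         + (snd v - (snd v + t * (snd w - snd v))) ^ 2)
    with (t ^ 2 * ((fst v - fst w) ^ 2 + (snd v - snd w) ^ 2)) by ring.
  rewrite sqrt_mult_alt, sqrt_pow2 by (exact ht || apply pow2_ge_0).
  reflexivity.
Qed.

Lemma exists_on_ray_edist {v w : point} (c : R) : w <> v -> 0 <= c ->
  exists q, on_ray v w q /\ edist v q = c.
Proof.
  intros hwv hc.
  assert (hL : 0 < edist v w) by (apply edist_pos; congruence).
  assert (ht : 0 <= c / edist v w) by (apply Rle_mult_inv_pos; lra).
  eexists; split; [exists (c / edist v w); split; [exact ht | reflexivity]|].
  rewrite edist_ray by exact ht; field; lra.
Qed.

Definition ray_proj (p v w : point) : R :=
  ((fst p - fst v) * (fst w - fst v) + (snd p - snd v) * (snd w - snd v)) / edist v w.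

Lemma edist_on_ray_sqr (p : point) {v w q : point} : w <> v -> on_ray v w q ->
  edist p q ^ 2 = edist v q ^ 2 - 2 * ray_proj p v w * edist v q + edist p v ^ 2.
Proof.
  intros hwv [t [ht ->]].
  assert (hL : 0 < edist v w) by (apply edist_pos; congruence).
  rewrite edist_ray by exact ht; unfold ray_proj.
  replace (2 * (((fst p - fst v) * (fst w - fst v) + (snd p - snd v) * (snd w - snd v))
            / edist v w) * (t * edist v w))
    with (2 * t * ((fst p - fst v) * (fst w - fst v) + (snd p - snd v) * (snd w - snd v)))
    by (field; lra).
  rewrite Rpow_mult_distr, !edist_sqr; cbn [fst snd]; ring.
Qed.

Theorem lemma4 (p v w : point) (c1 c2 : R) :
  p <> v -> w <> v -> ~ on_ray v w p ->
  0 < c1 -> c1 < c2 ->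
  forall q : point, on_ray v w q ->
    edist p q > edist v q -> edist v q >= c1 ->
    exists q' : point, on_ray v w q' /\
      (edist v q' = c1 \/ edist v q' = c2) /\
      ratio p v c2 q <= ratio p v c2 q'.
Proof.
  intros _ hwv _ hc1 hc12 q hq hfar hnear.
  assert (hpq := edist_on_ray_sqr p hwv hq).
  assert (hpv := pow2_ge_0 (edist p v)).
  destruct (monic_quadratic_ratio_max_at_endpoints (ray_proj p v w) (edist p v ^ 2)
              c1 c2 (edist v q) hpv (conj hc1 hc12) ltac:(lra))
    as [c [hc hle]].
  { rewrite <- hpq; nra. }
  destruct (exists_on_ray_edist c hwv ltac:(lra)) as [q' [hq' hvq']].
  exists q'; split; [exact hq'|]; split; [rewrite hvq'; exact hc|].
  unfold ratio; rewrite hvq', (Rmax_right c c2) by lra.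
  apply div_le_div_of_sqr; try apply sqrt_pos;
    [apply (Rlt_le_trans _ c2); [lra | apply Rmax_r] | lra|].
  rewrite hpq, (edist_on_ray_sqr p hwv hq'), hvq'; exact hle.
Qed.
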